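(* Let $n\ge2$, let $R$ be a commutative unital profinite ring, and let $G$ be a profinite group. Then $T^{\bar{\mathbb{U}}_n(R)}(G)=T^{\mathbb{U}_{n-1}(R)}(G)$.
   Context: For profinite groups $\mathbb{U}$ and $G$, $T^{\mathbb{U}}(G)$ denotes the intersection of the kernels of all continuous homomorphisms $G\to\mathbb{U}$. $\mathbb{U}_n(R)$ is the group of unipotent upper-triangular $(n+1)\times(n+1)$ matrices over $R$; $R^+$ embeds centrally in it via $r\mapsto I_{n+1}+rE_{1,n+1}$, and $\bar{\mathbb{U}}_n(R)=\mathbb{U}_n(R)/R^+$. *)

From HB Require Import structures.
From mathcomp Require Import all_boot all_order all_algebra.
From mathcomp Require Import all_classical topology.


Import GRing.Theory.
Local Open Scope classical_set_scope.
Local Open Scope ring_scope.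

#[short(type="topGroupType")]
HB.structure Definition TopGroup := {G of monoid.Group G & Topological G}.

Definition profinite_group (G : topGroupType) : Prop :=
  [/\ continuous (fun p : G * G => (p.1 * p.2)%g),
      continuous (fun x : G => (x^-1)%g),
      compact [set: G],
      hausdorff_space G &
      totally_disconnected [set: G]].

#[short(type="topComRingType")]
HB.structure Definition TopComRing := {R of GRing.ComPzRing R & Topological R}.

Definition profinite_ring (R : topComRingType) : Prop :=
  [/\ continuous (fun p : R * R => p.1 + p.2),
      continuous (fun p : R * R => p.1 * p.2),
      continuous (fun x : R => - x) &
      [/\ compact [set: R], hausdorff_space R &
          totally_disconnected [set: R]]].

Definition open_in {T : topologicalType} (S O : set T) : Prop :=
  exists2 O', open O' & O = O' `&` S.

Section Unipotent.
Variable R : topComRingType.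

(* U_m(R): unipotent upper-triangular (m+1)x(m+1) matrices, as a subset of
   'M[R]_(m.+1), carrying the subspace of the (product) matrix topology. *)
Definition Umx (m : nat) : set 'M[R]_(m.+1) :=
  [set A : 'M[R]_(m.+1) | (forall i j : 'I_(m.+1), (j < i)%N -> A i j = 0) /\
           (forall i : 'I_(m.+1), A i i = 1)].

Definition Rplus_emb (n : nat) (r : R) : 'M[R]_(n.+1) :=
  1%:M + r *: delta_mx 0 ord_max.

Definition Rplus_img (n : nat) : set 'M[R]_(n.+1) := range (Rplus_emb n).

Definition Rcoset (n : nat) (A : 'M[R]_(n.+1)) : set 'M[R]_(n.+1) :=
  [set A *m z | z in Rplus_img n].

(* Elements of \bar U_n(R) = U_n(R)/R^+ are the cosets A R^+, A in U_n(R). *)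
Definition Ubar_elt (n : nat) (X : set 'M[R]_(n.+1)) : Prop :=
  exists2 A, Umx n A & X = Rcoset n A.

Definition coset_mul (n : nat) (X Y : set 'M[R]_(n.+1)) : set 'M[R]_(n.+1) :=
  [set x *m y | x in X & y in Y].

Definition cont_hom_U (G : topGroupType) (m : nat) (f : G -> 'M[R]_(m.+1)) :
    Prop :=
  [/\ forall g, Umx m (f g),
      forall x y, f (x * y)%g = f x *m f y &
      continuous f].

(* Continuous homomorphisms G -> \bar U_n(R), where \bar U_n(R) carries the
   quotient topology: a set W of cosets is open iff its union (the preimage of
   W under the projection) is open in U_n(R). *)
Definition cont_hom_Ubar (G : topGroupType) (n : nat)
    (phi : G -> set 'M[R]_(n.+1)) : Prop :=
  [/\ forall g, Ubar_elt n (phi g),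
      forall x y, phi (x * y)%g = coset_mul n (phi x) (phi y) &
      forall W : set (set 'M[R]_(n.+1)),
        (forall X, W X -> Ubar_elt n X) ->
        open_in (Umx n) (\bigcup_(X in W) X) ->
        open (phi @^-1` W)].

Definition T_U (G : topGroupType) (m : nat) : set G :=
  [set g | forall f : G -> 'M[R]_(m.+1), cont_hom_U G m f -> f g = 1%:M].

(* T^{\bar U_n(R)}(G): the identity of \bar U_n(R) is the coset R^+. *)
Definition T_Ubar (G : topGroupType) (n : nat) : set G :=
  [set g | forall phi : G -> set 'M[R]_(n.+1), cont_hom_Ubar G n phi ->
           phi g = Rplus_img n].

End Unipotent.

From HB Require Import structures.
From mathcomp Require Import all_boot all_order all_algebra.
From mathcomp Require Import all_classical topology.

(* Write n = m+1, so U_n(R) consists of (m+2)x(m+2) matrices, and let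
   E = E_{1,n+1} be the corner matrix spanning R^+.  Two kinds of maps link
   \bar U_n(R) and U_{n-1}(R):
   - the minors deleting the first (resp. last) row and column are
     continuous homomorphisms U_n(R) -> U_{n-1}(R) that are constant on
     R^+-cosets, hence factor through \bar U_n(R); an element of U_n(R)
     killed by both minors lies in R^+ (lemma [minors_trivial_Rplus]);
   - bordering a matrix with a leading 1 is a continuous homomorphism
     U_{n-1}(R) -> U_n(R) whose composite with the first minor is the
     identity.
   Composing a continuous hom G -> U_{n-1}(R) with the bordering map and the
   projection gives one to \bar U_n(R), so T^{\bar U_n} is in T^{U_{n-1}};
   conversely, composing a continuous hom G -> \bar U_n(R) with the two minors
   gives two homs to U_{n-1}(R), whence T^{U_{n-1}} is in T^{\bar U_n}.
   Neither argument uses profiniteness of R or G. *)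

Import GRing.Theory.
Local Open Scope classical_set_scope.
Local Open Scope ring_scope.

Lemma mulmx_delta_entry (K : pzRingType) (n : nat) (A : 'M[K]_n)
    (i j k l : 'I_n) :
  (A *m delta_mx i j) k l = A k i * (l == j)%:R.
Proof.
rewrite !mxE (bigD1 i) //= mxE eqxx /= big1 ?addr0 // => p /negPf pi.
by rewrite mxE pi mulr0.
Qed.

Lemma delta_mulmx_entry (K : pzRingType) (n : nat) (A : 'M[K]_n)
    (i j k l : 'I_n) :
  (delta_mx i j *m A) k l = (k == i)%:R * A j l.
Proof.
rewrite !mxE (bigD1 j) //= mxE eqxx andbT big1 ?addr0 // => p /negPf pj.
by rewrite mxE pj andbF mul0r.
Qed.

Lemma Rcoset1 (R : topComRingType) (n : nat) :
  Rcoset R n 1%:M = Rplus_img R n.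
Proof.
apply/seteqP; split=> X; first by move=> [z zR <-]; rewrite mul1mx.
by move=> XR; exists X => //; rewrite mul1mx.
Qed.

Section UnipotentQuotient.
Variables (R : topComRingType) (m : nat).
Local Notation M := 'M[R]_(m.+2).
Local Notation N := 'M[R]_(m.+1).
Local Notation U := (Umx R m.+1).
Local Notation emb := (Rplus_emb R m.+1).
Local Notation coset := (Rcoset R m.+1).
Local Notation E := (delta_mx (0 : 'I_m.+2) (ord_max : 'I_m.+2) : M).

Lemma Umx1 : U 1%:M.
Proof.
split=> [i j ji|i]; rewrite mxE ?eqxx //.
by case: eqP => // ij; rewrite ij ltnn in ji.
Qed.

Lemma Rplus_emb0 : emb 0 = 1%:M.
Proof. by rewrite /Rplus_emb scale0r addr0. Qed.

Lemma Rplus_embD r s : emb r *m emb s = emb (r + s).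
Proof.
rewrite /Rplus_emb mulmxDl !mulmxDr !mul1mx mulmx1 -!scalemxAl.
rewrite -!scalemxAr mul_delta_mx_cond.
have -> : (ord_max == 0 :> 'I_m.+2) = false by [].
by rewrite mulr0n !scaler0 addr0 scalerDl -addrA [s *: _ + _]addrC.
Qed.

(* E absorbs unipotent matrices on both sides, so R^+ is central in U_n(R). *)
Lemma Umx_corner_absorb (A : M) : U A -> A *m E = E /\ E *m A = E.
Proof.
move=> [Al Ad]; split; apply/matrixP => k l.
  rewrite mulmx_delta_entry mxE; have [->|k0] := eqVneq k 0.
    by rewrite Ad mul1r.
  rewrite Al ?mul0r ?andFb //.
  by rewrite lt0n; apply: contra k0 => /eqP k0; apply/eqP/val_inj.
rewrite delta_mulmx_entry mxE; have [->|lm] := eqVneq l ord_max.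
  by rewrite Ad mulr1 andbT.
rewrite Al ?mulr0 ?andbF //.
have := ltn_ord l; rewrite ltnS leq_eqVlt => /orP[/eqP h|//].
by case/eqP: lm; apply/val_inj.
Qed.

Lemma Rplus_central (A : M) r : U A -> emb r *m A = A *m emb r.
Proof.
move=> /Umx_corner_absorb [AE EA].
by rewrite /Rplus_emb mulmxDl mulmxDr mul1mx mulmx1 -scalemxAl -scalemxAr AE EA.
Qed.

Lemma Umx_mul_Rplus (A : M) r : U A -> U (A *m emb r).
Proof.
move=> [Al Ad]; rewrite /Rplus_emb mulmxDr mulmx1 -scalemxAr; split.
  move=> i j ji; rewrite mxE mxE mulmx_delta_entry (Al i j ji) (Al i 0).
    by rewrite mul0r mulr0 addr0.
  exact: leq_ltn_trans (leq0n j) ji.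
move=> i; rewrite mxE mxE mulmx_delta_entry Ad.
have [->|_] := eqVneq i ord_max.
  by rewrite (Al ord_max 0) // mul0r mulr0 addr0.
by rewrite mulr0n !mulr0 addr0.
Qed.

Lemma Rcoset_self (A : M) : coset A A.
Proof. by exists (emb 0); [exists 0 | rewrite Rplus_emb0 mulmx1]. Qed.

Lemma Rcoset_mul_Rplus (A : M) r : coset (A *m emb r) = coset A.
Proof.
apply/seteqP; split=> X [z [s _ <-] <-].
  by exists (emb (r + s)); [exists (r + s) | rewrite -Rplus_embD mulmxA].
exists (emb (s - r)); first by exists (s - r).
by rewrite -mulmxA Rplus_embD addrC subrK.
Qed.

Lemma Rcoset_eq (A B : M) : coset A B -> coset B = coset A.
Proof. by move=> [z [r _ <-] <-]; rewrite Rcoset_mul_Rplus. Qed.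

Lemma coset_mul_Rcoset (A B : M) : U A -> U B ->
  coset_mul R m.+1 (coset A) (coset B) = coset (A *m B).
Proof.
move=> UA UB; apply/seteqP; split=> X.
  move=> [x [z1 [r1 _ <-] <-]] [y [z2 [r2 _ <-] <-]] <-.
  exists (emb (r1 + r2)); first by exists (r1 + r2).
  by rewrite -Rplus_embD !mulmxA -(mulmxA A) -(mulmxA A (emb r1)) Rplus_central.
move=> [z zR <-]; exists A; first exact: Rcoset_self.
by exists (B *m z); [exists z | rewrite mulmxA].
Qed.

Definition minor_mx (s : 'I_m.+2) (A : M) : N :=
  \matrix_(i, j) A (lift s i) (lift s j).

(* Only the first and last indices give homomorphisms U_n -> U_{n-1}. *)
Definition corner_index (s : 'I_m.+2) : Prop := s = 0 \/ s = ord_max.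

Lemma lift_ltn (s : 'I_m.+2) (i j : 'I_m.+1) :
  (lift s j < lift s i)%N = (j < i)%N.
Proof. by rewrite /= !ltnNge leq_bump2. Qed.

Lemma minor_Umx s A : U A -> Umx R m (minor_mx s A).
Proof.
move=> [Al Ad]; split=> [i j ji|i]; rewrite mxE ?Ad //.
by rewrite Al // lift_ltn.
Qed.

Lemma minor_mul s A B : corner_index s -> U A -> U B ->
  minor_mx s (A *m B) = minor_mx s A *m minor_mx s B.
Proof.
move=> cs [Al _] [Bl _]; apply/matrixP => i j.
rewrite mxE [RHS]mxE mxE (bigD1_ord s) //=.
have -> : A (lift s i) s * B s (lift s j) = 0.
  case: cs => ->; first by rewrite Al ?mul0r // /= /bump leq0n.
  by rewrite (Bl ord_max (lift ord_max j)) ?mulr0 // lift_max.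
by rewrite add0r; apply: eq_bigr => k _; rewrite !mxE.
Qed.

Lemma minor_mul_Rplus s A r : corner_index s -> U A ->
  minor_mx s (A *m emb r) = minor_mx s A.
Proof.
move=> cs [Al _]; apply/matrixP => i j.
rewrite /Rplus_emb mulmxDr mulmx1 -scalemxAr [RHS]mxE mxE mxE mxE mulmx_delta_entry.
case: cs => ->.
  by rewrite (Al _ 0) ?mul0r ?mulr0 ?addr0 // /= /bump leq0n.
have -> : (lift ord_max j == ord_max :> 'I_m.+2) = false.
  by apply/negbTE; rewrite eq_sym neq_lift.
by rewrite mulr0n !mulr0 addr0.
Qed.

Lemma minor1 s : minor_mx s 1%:M = 1%:M.
Proof.
apply/matrixP => i j; rewrite !mxE; congr (_%:R).
by rewrite (inj_eq (@lift_inj _ s)).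
Qed.

Lemma minor_Rcoset s A B : corner_index s -> U A -> coset A B ->
  minor_mx s B = minor_mx s A.
Proof. by move=> cs UA [z [r _ <-] <-]; rewrite minor_mul_Rplus. Qed.

Lemma minor_continuous s : continuous (minor_mx s).
Proof.
move=> A Q [P PA sub].
exists (fun k l => match unlift s k, unlift s l with
   Some a, Some b => P a b | _, _ => setT end).
  move=> k l; case: (unliftP s k) => [a ->|_]; case: (unliftP s l) => [b ->|_];
    rewrite ?liftK; try exact: filterT.
  by have := PA a b; rewrite mxE.
move=> B HB; apply: sub => a b; have := HB (lift s a) (lift s b).
by rewrite !liftK mxE.
Qed.

Lemma minors_trivial_Rplus A : U A ->
  minor_mx 0 A = 1%:M -> minor_mx ord_max A = 1%:M -> A = emb (A 0 ord_max).
Proof.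
move=> [Al _] P0 Pm.
have off_max k l s : minor_mx s A = 1%:M -> k != s -> l != s ->
    A k l = (k == l)%:R.
  move=> Ps; case: (unliftP s k) => [a ->|->]; last by rewrite eqxx.
  case: (unliftP s l) => [b ->|->]; last by rewrite eqxx.
  move=> _ _; move/matrixP/(_ a b): Ps; rewrite !mxE => ->.
  by rewrite (inj_eq (@lift_inj _ _)).
have m0 : (ord_max : 'I_m.+2) != 0 by [].
apply/matrixP => k l; rewrite /Rplus_emb !mxE.
have [->|k0] := eqVneq k 0; have [->|lm] := eqVneq l ord_max.
- by rewrite eq_sym (negPf m0) mulr1 add0r.
- by rewrite (off_max _ _ ord_max) ?mulr0n ?mulr0 ?addr0 // eq_sym.
- by rewrite (off_max _ _ 0) ?mulr0n ?mulr0 ?addr0.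
have [->|l0] := eqVneq l 0; last first.
  by rewrite (off_max _ _ 0) ?mulr0n ?mulr0 ?addr0.
have [->|km] := eqVneq k ord_max; last first.
  by rewrite (off_max _ _ ord_max) ?mulr0n ?mulr0 ?addr0.
by rewrite Al // (negPf m0) mulr0n mulr0 addr0.
Qed.

Definition border_mx (B : N) : M := \matrix_(i, j)
  match unlift 0 i, unlift 0 j with
  | Some a, Some b => B a b
  | _, _ => (i == j)%:R
  end.

Lemma border00 B : border_mx B 0 0 = 1.
Proof. by rewrite mxE unlift_none. Qed.

Lemma border0l B (b : 'I_m.+1) : border_mx B 0 (lift 0 b) = 0.
Proof. by rewrite mxE unlift_none (negPf (@neq_lift m.+2 0 b)). Qed.

Lemma borderl0 B (a : 'I_m.+1) : border_mx B (lift 0 a) 0 = 0.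
Proof. by rewrite mxE liftK unlift_none eq_sym (negPf (@neq_lift m.+2 0 a)). Qed.

Lemma borderll B (a b : 'I_m.+1) : border_mx B (lift 0 a) (lift 0 b) = B a b.
Proof. by rewrite mxE !liftK. Qed.

Lemma minor_border B : minor_mx 0 (border_mx B) = B.
Proof. by apply/matrixP => i j; rewrite mxE borderll. Qed.

Lemma border_mul B C : border_mx (B *m C) = border_mx B *m border_mx C.
Proof.
apply/matrixP => i j; rewrite [RHS]mxE (bigD1_ord 0) //=.
case: (unliftP 0 i) => [a ->|->]; case: (unliftP 0 j) => [b ->|->].
- rewrite !borderl0 mul0r add0r borderll mxE; apply: eq_bigr => k _.
  by rewrite !borderll.
- by rewrite !borderl0 mul0r add0r big1 // => k _; rewrite borderl0 mulr0.
- by rewrite !border0l mulr0 add0r big1 // => k _; rewrite border0l mul0r.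
- by rewrite !border00 mul1r big1 ?addr0 // => k _; rewrite border0l mul0r.
Qed.

Lemma border_Umx B : Umx R m B -> U (border_mx B).
Proof.
move=> [Bl Bd]; split=> [i j|i].
  case: (unliftP 0 i) => [a ->|->]; case: (unliftP 0 j) => [b ->|->].
  - by rewrite borderll lift_ltn => /Bl.
  - by rewrite borderl0.
  - by rewrite border0l.
  - by rewrite ltnn.
by case: (unliftP 0 i) => [a ->|->]; rewrite ?borderll ?border00.
Qed.

Lemma border_continuous : continuous border_mx.
Proof.
move=> B Q [P PA sub].
exists (fun a b => P (lift 0 a) (lift 0 b)).
  by move=> a b; have := PA (lift 0 a) (lift 0 b); rewrite borderll.
move=> C HC; apply: sub => k l.
case: (unliftP 0 k) => [a ->|->]; case: (unliftP 0 l) => [b ->|->].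
- by rewrite borderll; exact: HC.
- by have := nbhs_singleton (PA (lift 0 a) 0); rewrite !borderl0.
- by have := nbhs_singleton (PA 0 (lift 0 b)); rewrite !border0l.
- by have := nbhs_singleton (PA 0 0); rewrite !border00.
Qed.

Lemma Rcoset_comp_quotient_open (T : topologicalType) (F : T -> M) :
  continuous F -> (forall x, U (F x)) ->
  forall W : set (set M), (forall X, W X -> Ubar_elt R m.+1 X) ->
  open_in U (\bigcup_(X in W) X) -> open ((coset \o F) @^-1` W).
Proof.
move=> Fc FU W WUbar [O' oO' WO].
have -> : (coset \o F) @^-1` W = F @^-1` O'.
  apply/seteqP; split=> x /= Wx.
    have : (\bigcup_(X in W) X) (F x) by exists (coset (F x)) => //; exact: Rcoset_self.
    by rewrite WO => -[].
  have : (O' `&` U) (F x) by [].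
  rewrite -WO => -[X WX Xx]; have [A UA XA] := WUbar X WX.
  by rewrite (@Rcoset_eq A (F x)) -?XA.
by move: oO'; apply: (proj1 (continuousP _)).
Qed.

(* Dually, if p is continuous and constant on cosets, the set of cosets
   that p sends into an open V is open in \bar U_n(R): its union is the
   (relatively open) set of unipotent matrices sent into V. *)
Lemma factor_quotient_open (T : topologicalType) (p : M -> T) :
  continuous p -> (forall A B, U A -> coset A B -> p B = p A) ->
  forall V, open V ->
  open_in U (\bigcup_(X in [set X | Ubar_elt R m.+1 X /\
                         forall A, U A -> X = coset A -> V (p A)]) X).
Proof.
move=> pc pcoset V oV; exists (p @^-1` V).
  by move: oV; apply: (proj1 (continuousP _)).
apply/seteqP; split=> B.
  move=> [X [[A UA XA] VA] XB]; rewrite XA in XB.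
  have [z [r _ ez] eB] := XB.
  split; last by rewrite -eB -ez; exact: Umx_mul_Rplus.
  by rewrite /= (pcoset _ _ UA XB); apply: VA.
move=> [VB UB]; exists (coset B); last exact: Rcoset_self.
split; first by exists B.
by move=> A UA eA; rewrite -(pcoset A B UA) // -eA; exact: Rcoset_self.
Qed.

Section FromUbar.
Variables (G : topGroupType) (phi : G -> set M).
Hypothesis phi_hom : cont_hom_Ubar R G m.+1 phi.

Definition rep (x : G) : M :=
  xget 1%:M [set A | U A /\ phi x = coset A].

Lemma repP x : U (rep x) /\ phi x = coset (rep x).
Proof.
have : exists A, U A /\ phi x = coset A.
  by case: phi_hom => phiU _ _; have [A UA ->] := phiU x; exists A.
exact: xgetPex.
Qed.

Lemma minor_rep_hom s : corner_index s ->
  cont_hom_U R G m (fun x => minor_mx s (rep x)).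
Proof.
case: phi_hom => phiU phiM phiC cs; split.
- by move=> x; apply: minor_Umx; case: (repP x).
- move=> x y; have [Ux ex] := repP x; have [Uy ey] := repP y.
  have [Uxy exy] := repP (x * y)%g.
  rewrite -minor_mul //; apply/esym/minor_Rcoset => //.
  by rewrite -exy phiM ex ey coset_mul_Rcoset //; exact: Rcoset_self.
- apply: (proj2 (continuousP _)) => V oV.
  pose W := [set X | Ubar_elt R m.+1 X /\
                     forall A, U A -> X = coset A -> V (minor_mx s A)].
  have -> : (fun x => minor_mx s (rep x)) @^-1` V = phi @^-1` W.
    apply/seteqP; split=> x /=; have [Ux ex] := repP x; last by move=> [_]; exact.
    move=> Vx; split; first exact: phiU.
    move=> A UA eA; rewrite -(@minor_Rcoset s A (rep x) cs UA) //.
    by rewrite -eA ex; exact: Rcoset_self.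
  apply: phiC; first by move=> X [].
  by apply: factor_quotient_open oV; [exact: minor_continuous | move=> A B; exact: minor_Rcoset].
Qed.

End FromUbar.

(* T^{U_{n-1}(R)}(G) is contained in T^{\bar U_n(R)}(G): if g is killed by
   both corner minors of phi, its representative lies in R^+. *)
Lemma T_U_sub_T_Ubar (G : topGroupType) : T_U R G m `<=` T_Ubar R G m.+1.
Proof.
move=> g Tg phi phi_hom.
have [Ug eg] := repP _ _ phi_hom g.
have min0 := Tg _ (minor_rep_hom _ _ phi_hom _ (or_introl erefl)).
have minm := Tg _ (minor_rep_hom _ _ phi_hom _ (or_intror erefl)).
rewrite eg (minors_trivial_Rplus _ Ug min0 minm) -(mul1mx (Rplus_emb _ _ _)).
by rewrite Rcoset_mul_Rplus Rcoset1.
Qed.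

(* T^{\bar U_n(R)}(G) is contained in T^{U_{n-1}(R)}(G): a continuous hom f
   to U_{n-1}(R) yields x |-> border(f x) R^+ to \bar U_n(R), and f is
   recovered from it by the first minor. *)
Lemma T_Ubar_sub_T_U (G : topGroupType) : T_Ubar R G m.+1 `<=` T_U R G m.
Proof.
move=> g Tg f [fU fM fC].
have Uborder x : U (border_mx (f x)) by exact: border_Umx.
pose phi x := coset (border_mx (f x)).
have phi_hom : cont_hom_Ubar R G m.+1 phi.
  split=> [x|x y|]; first by exists (border_mx (f x)).
    by rewrite /phi fM border_mul coset_mul_Rcoset.
  apply: Rcoset_comp_quotient_open => // x.
  exact: continuous_comp (fC x) (border_continuous _).
have : Rplus_img R m.+1 (border_mx (f g)).
  by rewrite -(Tg phi phi_hom); exact: Rcoset_self.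
move=> [r _ er].
rewrite -(minor_border (f g)) -er -(mul1mx (Rplus_emb _ _ r)).
by rewrite minor_mul_Rplus ?minor1 //; [left | exact: Umx1].
Qed.

End UnipotentQuotient.

Theorem lemma8p1 (n : nat) (R : topComRingType) (G : topGroupType) :
  (2 <= n)%N -> profinite_ring R -> profinite_group G ->
  T_Ubar R G n = T_U R G n.-1.
Proof.
case: n => [|m] // _ _ _ /=.
by apply/seteqP; split; [exact: T_Ubar_sub_T_U | exact: T_U_sub_T_Ubar].
Qed.
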